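(* Let $\mathcal A$ be a commutative semiring with negation map $(-)$ and let $A,B\in M_n(\mathcal A)$. Then $\mathrm{adj}(B)\,\mathrm{adj}(A)\preceq_\circ \mathrm{adj}(AB)$ (entrywise).
   Context: A commutative semiring: commutative associative addition with neutral $\mathbb 0$, commutative associative multiplication with identity $\mathbb 1$, distributive, $x\mathbb 0=\mathbb 0$. Negation map: $(-):\mathcal A\to\mathcal A$ with $(-)(x+y)=(-)x+(-)y$, $(-)((-)x)=x$, $(-)(xy)=((-)x)y$. Write $x(-)y:=x+((-)y)$, $x^\circ:=x(-)x$; $x\preceq_\circ y$ iff $y=x+z^\circ$ for some $z\in\mathcal A$; for matrices, $X\preceq_\circ Y$ iff $X_{ij}\preceq_\circ Y_{ij}$ for all $i,j$. For a permutation $\pi$, $(-)^\pi x=x$ if $\pi$ is even and $(-)x$ if odd; similarly $(-)^kx$ is $x$ for $k$ even and $(-)x$ for $k$ odd. The $(-)$-determinant of $A=(a_{ij})$ is $|A|=\sum_{\pi\in S_n}(-)^\pi\prod_i a_{i,\pi(i)}$. The $(-)$-adjoint $\mathrm{adj}(A)$ is the matrix whose $(i,j)$ entry is $(-)^{i+j}|A_{(j,i)}|$, where $A_{(j,i)}$ is $A$ with row $j$ and column $i$ deleted. *)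

From HB Require Import structures.
From mathcomp Require Import all_boot all_order all_algebra all_fingroup.
Set Implicit Arguments. Unset Strict Implicit. Unset Printing Implicit Defensive.
Import GRing.Theory.
Local Open Scope ring_scope.

Definition is_negation_map (R : comPzSemiRingType) (neg : R -> R) : Prop :=
  [/\ forall x y : R, neg (x + y) = neg x + neg y,
      forall x : R, neg (neg x) = x &
      forall x y : R, neg (x * y) = neg x * y].

Definition negpow (R : comPzSemiRingType) (neg : R -> R) (b : bool) (x : R) : R :=
  if b then neg x else x.

Definition qzero (R : comPzSemiRingType) (neg : R -> R) (x : R) : R := x + neg x.

Definition prec_circ (R : comPzSemiRingType) (neg : R -> R) (x y : R) : Prop :=
  exists z : R, y = x + qzero neg z.

Definition mx_prec_circ (R : comPzSemiRingType) (neg : R -> R) m n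
  (X Y : 'M[R]_(m, n)) : Prop :=
  forall i j, prec_circ neg (X i j) (Y i j).

Definition negdet (R : comPzSemiRingType) (neg : R -> R) n (A : 'M[R]_n) : R :=
  \sum_(s : 'S_n) negpow neg (odd_perm s) (\prod_i A i (s i)).

Definition negadj (R : comPzSemiRingType) (neg : R -> R) n (A : 'M[R]_n) : 'M[R]_n :=
  \matrix_(i, j) negpow neg (odd (i + j)%N) (negdet neg (row' j (col' i A))).

(* The (i, j) entry of adj(AB) is, up to the sign (-)^(i+j), the (-)-determinant of the product
   C D of A without row j and B without column i.  Expanding |C D| multilinearly over all maps
   f : [n-1] -> [n], the injective f reproduce the Cauchy-Binet sum
   sum_k |C without column k| |D without row k|, which is the (i, j) entry of adj(B) adj(A).
   The terms of a non-injective f pair up as (s, tau s) with opposite parities; since (-) is only a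
   negation map and not an additive inverse, they leave a quasi-zero x (-) x instead of 0. *)
From HB Require Import structures.
From mathcomp Require Import all_boot all_order all_algebra all_fingroup.
Set Implicit Arguments. Unset Strict Implicit. Unset Printing Implicit Defensive.
Import GRing.Theory.
Local Open Scope ring_scope.

Section LiftFfun.
Variable m : nat.

Definition lift_ffun (p : 'I_m.+1 * 'S_m) : {ffun 'I_m -> 'I_m.+1} :=
  [ffun i => lift p.1 (p.2 i)].

Lemma lift_ffun_inj : injective lift_ffun.
Proof.
move=> [k t] [k' t'] /ffunP /= eq_lift.
have eq_k : k = k'.
  apply/eqP; apply/negPn/negP => /unlift_some[j def_j _].
  have := eq_lift (t^-1 j)%g; rewrite !ffunE /= permKV -def_j => eq_lift_j.
  by have := neq_lift k' (t' (t^-1 j)%g); rewrite -eq_lift_j eqxx.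
subst k'; congr pair; apply/permP => i.
by have := eq_lift i; rewrite !ffunE /= => /lift_inj.
Qed.

Lemma injective_lift_ffun_image (f : {ffun 'I_m -> 'I_m.+1}) :
  injectiveb f -> f \in [set lift_ffun p | p in [set: 'I_m.+1 * 'S_m]].
Proof.
move/injectiveP => inj_f.
have [k k_miss | codom_full] := pickP (fun k => k \notin codom f); last first.
  have codomT : codom f =i predT by move=> k; have := codom_full k => /negbFE ->.
  have := card_codom inj_f; rewrite (eq_card codomT) !card_ord.
  by move/esym/n_Sn.
have k_neq i : k != f i by apply: contraNneq k_miss => ->; apply: codom_f.
pose t i := odflt i (unlift k (f i)).
have lift_t i : lift k (t i) = f i.
  by have [j def_j eq_j] := unlift_some (k_neq i); rewrite /t eq_j def_j.
have inj_t : injective t by move=> i1 i2 eq_t; apply: inj_f; rewrite -!lift_t eq_t.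
apply/imsetP; exists (k, perm inj_t); first by rewrite inE.
by apply/ffunP => i; rewrite ffunE /= permE lift_t.
Qed.

End LiftFfun.

Section NegationMap.
Variables (R : comPzSemiRingType) (neg : R -> R).
Hypothesis Hneg : is_negation_map neg.

Lemma neg0 : neg 0 = 0.
Proof. by case: Hneg => _ _ negM; have := negM 0 0; rewrite !mulr0. Qed.

Lemma negpow0 b : negpow neg b 0 = 0.
Proof. by case: b => //=; apply: neg0. Qed.

Lemma negpowD b x y : negpow neg b (x + y) = negpow neg b x + negpow neg b y.
Proof. by case: Hneg => negD _ _; case: b => /=. Qed.

Lemma negpow_sum b (I : Type) (r : seq I) (P : pred I) (F : I -> R) :
  negpow neg b (\sum_(i <- r | P i) F i) = \sum_(i <- r | P i) negpow neg b (F i).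
Proof. by elim/big_rec2: _ => [|i x y _ <-]; rewrite ?negpow0 ?negpowD. Qed.

Lemma negpowMl b x y : negpow neg b x * y = negpow neg b (x * y).
Proof. by case: Hneg => _ _ negM; case: b => /=. Qed.

Lemma negpowMr b x y : x * negpow neg b y = negpow neg b (x * y).
Proof. by rewrite mulrC negpowMl mulrC. Qed.

Lemma negpowK a b x : negpow neg a (negpow neg b x) = negpow neg (a (+) b) x.
Proof. by case: Hneg => _ negK _; case: a; case: b => /=. Qed.

Lemma negpowM a b x y :
  negpow neg a x * negpow neg b y = negpow neg (a (+) b) (x * y).
Proof. by rewrite negpowMl negpowMr negpowK addbC. Qed.

Definition is_qzero (y : R) : Prop := exists z, y = qzero neg z.

Lemma is_qzero0 : is_qzero 0.
Proof. by exists 0; rewrite /qzero neg0 addr0. Qed.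

Lemma is_qzeroD x y : is_qzero x -> is_qzero y -> is_qzero (x + y).
Proof.
case: Hneg => negD _ _ [a ->] [b ->].
by exists (a + b); rewrite /qzero negD addrACA.
Qed.

Lemma is_qzero_sum (I : Type) (r : seq I) (P : pred I) (F : I -> R) :
  (forall i, P i -> is_qzero (F i)) -> is_qzero (\sum_(i <- r | P i) F i).
Proof. by move=> qzF; apply: big_ind => //; [apply: is_qzero0 | apply: is_qzeroD]. Qed.

Lemma prec_circ_negpow b x y :
  prec_circ neg x y -> prec_circ neg (negpow neg b x) (negpow neg b y).
Proof.
case: Hneg => negD negK _ [z ->]; exists z.
by case: b => //=; rewrite !negD negK [neg z + z]addrC.
Qed.

Section CauchyBinet.
Variables (m : nat) (C : 'M[R]_(m, m.+1)) (D : 'M[R]_(m.+1, m)).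

Definition binet_term (f : {ffun 'I_m -> 'I_m.+1}) : R :=
  \sum_(s : 'S_m) negpow neg (odd_perm s) (\prod_i (C i (f i) * D (f i) (s i))).

Lemma negdet_mulmx_expand : negdet neg (C *m D) = \sum_(f : {ffun 'I_m -> 'I_m.+1}) binet_term f.
Proof.
rewrite /negdet /binet_term exchange_big /=; apply: eq_bigr => s _.
rewrite -negpow_sum; congr negpow.
rewrite -(bigA_distr_bigA (fun i l => C i l * D l (s i))) /=.
by apply: eq_bigr => i _; rewrite mxE.
Qed.

(* If f i1 = f i2, composing with the transposition (i1 i2) flips the parity of s without
   changing its product, so the even and odd halves of the sum are x and (-)x. *)
Lemma binet_term_noninj (f : {ffun 'I_m -> 'I_m.+1}) :
  ~~ injectiveb f -> is_qzero (binet_term f).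
Proof.
case/injectivePn => i1 [i2 neq_i12 eq_f12]; pose t := tperm i1 i2.
have odd_ts (s : 'S_m) : odd_perm (t * s)%g = ~~ odd_perm s.
  by rewrite odd_permM odd_tperm neq_i12.
have prod_ts (s : 'S_m) : \prod_i (C i (f i) * D (f i) ((t * s)%g i))
                          = \prod_i (C i (f i) * D (f i) (s i)).
  rewrite !big_split /=; congr (_ * _); rewrite (reindex_perm t) /=.
  apply: eq_bigr => i _; rewrite permM tpermK; congr (D _ _).
  by rewrite /t; case: tpermP => // ->.
rewrite /binet_term (bigID (fun s : 'S_m => odd_perm s)) /= (reindex_inj (mulgI t)) /=.
exists (\sum_(s : 'S_m | ~~ odd_perm s)
          negpow neg (odd_perm s) (\prod_i (C i (f i) * D (f i) (s i)))).
rewrite /qzero addrC; congr (_ + _).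
rewrite -[neg _]/(negpow neg true _) negpow_sum; apply: eq_big => s; first by rewrite odd_ts.
by rewrite odd_ts prod_ts => /negbTE ->.
Qed.

Lemma sum_binet_term_lift k :
  \sum_(t : 'S_m) binet_term (lift_ffun (k, t))
  = negdet neg (col' k C) * negdet neg (row' k D).
Proof.
rewrite /negdet big_distrl /=; apply: eq_bigr => t _.
rewrite big_distrr /= /binet_term (reindex_inj (mulgI t)) /=.
apply: eq_bigr => s _; rewrite negpowM odd_permM; congr negpow.
rewrite big_split /=; congr (_ * _); first by apply: eq_bigr => i _; rewrite ffunE mxE.
by rewrite [RHS](reindex_perm t) /=; apply: eq_bigr => i _; rewrite ffunE permM mxE.
Qed.

Lemma negdet_mulmx_cauchy_binet :
  prec_circ neg (\sum_k negdet neg (col' k C) * negdet neg (row' k D))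
                (negdet neg (C *m D)).
Proof.
pose lifted := [set lift_ffun p | p in [set: 'I_m.+1 * 'S_m]].
rewrite negdet_mulmx_expand (bigID (mem lifted)) /=.
have [z def_z] : is_qzero (\sum_(f | f \notin lifted) binet_term f).
  apply: is_qzero_sum => f f_out; apply: binet_term_noninj.
  by apply: contra f_out; apply: injective_lift_ffun_image.
exists z; rewrite -def_z; congr (_ + _).
rewrite big_imset /=; last by move=> ? ? _ _; apply: lift_ffun_inj.
rewrite (eq_bigl predT) => [|p]; last by rewrite inE.
rewrite -(pair_bigA _ (fun k t => binet_term (lift_ffun (k, t)))) /=.
by apply: eq_bigr => k _; rewrite sum_binet_term_lift.
Qed.

End CauchyBinet.

End NegationMap.

Lemma row'_col'C (T : Type) m n (i : 'I_m) (j : 'I_n) (A : 'M[T]_(m, n)) :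
  row' i (col' j A) = col' j (row' i A).
Proof. by apply/matrixP => a b; rewrite !mxE. Qed.

Lemma row'_col'_mulmx (R : comPzSemiRingType) m n p (i : 'I_m) (j : 'I_p)
  (A : 'M[R]_(m, n)) (B : 'M[R]_(n, p)) :
  row' i (col' j (A *m B)) = row' i A *m col' j B.
Proof. by apply/matrixP => a b; rewrite !mxE; apply: eq_bigr => l _; rewrite !mxE. Qed.

Theorem proposition8p20 (R : comPzSemiRingType) (neg : R -> R)
  (Hneg : is_negation_map neg) (n : nat) (A B : 'M[R]_n) :
  mx_prec_circ neg (negadj neg B *m negadj neg A) (negadj neg (A *m B)).
Proof.
case: n A B => [|m] A B i j; first by case: i.
rewrite !mxE row'_col'_mulmx.
have [z ->] := prec_circ_negpow Hneg (odd (i + j))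
                 (negdet_mulmx_cauchy_binet Hneg (row' j A) (col' i B)).
exists z; congr (_ + _); rewrite negpow_sum //; apply: eq_bigr => k _.
rewrite !mxE negpowM // [in RHS]mulrC (row'_col'C j k A); congr negpow.
by rewrite !oddD; case: (odd i); case: (odd k); case: (odd j).
Qed.
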